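(* Let $x\in V(D^+)\setminus\{s\}$. For any $y\in C(x)$, $I_s(x)\preceq I_s(y)$.
   Context: $G=(V,E,w)$ is a simple, connected, undirected graph with positive edge lengths, $s,t\in V$. $D$ is the union of all shortest $st$-paths of $G$, and $D^+$ is the directed acyclic graph obtained from $D$ by orienting every edge toward $t$. For $x,y\in V(D^+)$, $x\prec y$ means $x$ is an ancestor of $y$ in $D^+$ (a directed path of positive length from $x$ to $y$ exists), and $x\preceq y$ means $x\prec y$ or $x=y$. For $x\neq s$, $v\neq x$ is an $s$-dominator of $x$ if every directed path from $s$ to $x$ in $D^+$ contains $v$, and $I_s(x)$ is the $s$-dominator of $x$ closest to $x$ (every other $s$-dominator of $x$ is an $s$-dominator of $I_s(x)$). For $x\neq s$, $C(x)=\{v\in V(D^+): I_s(x)\prec v\prec x\}$. *)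

From mathcomp Require Import all_boot all_order all_algebra.
From Stdlib Require Import Relations.
Set Implicit Arguments. Unset Strict Implicit. Unset Printing Implicit Defensive.
Import Order.TTheory GRing.Theory Num.Theory.
Local Open Scope ring_scope.

Section ShortestPathDAG.
Variables (R : realFieldType) (V : finType) (e : rel V) (w : V -> V -> R) (s t : V).

Fixpoint wlen (x : V) (p : seq V) : R :=
  match p with [::] => 0 | y :: p' => w x y + wlen y p' end.

(* s :: p is a shortest st-path of G: an st-walk of minimum total length
   (with positive lengths such a walk is automatically a simple path). *)
Definition shortest_st (p : seq V) : Prop :=
  [/\ path e s p, last s p = t &
      forall q, path e s q -> last s q = t -> wlen s p <= wlen s q].

Definition inD (v : V) : Prop := exists p, shortest_st p /\ v \in s :: p.

(* Arcs of D^+: edges of D oriented toward t, i.e. u -> v when u v are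
   consecutive (in this order) on some shortest st-path starting at s. *)
Definition darc (u v : V) : Prop :=
  exists p, shortest_st p /\ exists p1 p2, s :: p = p1 ++ u :: v :: p2.

Definition anc (x y : V) : Prop := clos_trans V darc x y.
Definition anceq (x y : V) : Prop := anc x y \/ x = y.

Fixpoint dchain (x : V) (q : seq V) : Prop :=
  match q with [::] => True | y :: q' => darc x y /\ dchain y q' end.

Definition sdom (x v : V) : Prop :=
  v <> x /\ forall q, dchain s q -> last s q = x -> v \in s :: q.

(* v = I_s(x): the s-dominator of x closest to x, i.e. every other
   s-dominator of x is an s-dominator of v. *)
Definition idom (x v : V) : Prop :=
  sdom x v /\ forall u, sdom x u -> u <> v -> sdom v u.

Definition inC (x v : V) : Prop :=
  inD v /\ exists ix, idom x ix /\ anc ix v /\ anc v x.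

End ShortestPathDAG.

From Stdlib Require Import Relations.
From mathcomp Require Import all_boot all_order all_algebra.
Import Order.TTheory GRing.Theory Num.Theory.
Local Open Scope ring_scope.
Set Implicit Arguments. Unset Strict Implicit.

(* D^+ is acyclic: along every arc u -> v the distance from s (the length of
   the s-prefix of any shortest st-path through the vertex, which does not
   depend on the path) increases by w u v > 0.  Hence dominators of x are
   strict ancestors of x and I_s(x) is unique.  For y in C(x), every s-y walk
   extends to an s-x walk along y ≺ x; it must meet I_s(x), and cannot meet it
   after y since I_s(x) ≺ y.  So I_s(x) is an s-dominator of y, hence either
   equal to I_s(y) or an s-dominator, thus an ancestor, of I_s(y). *)

Section ShortestPathDAG.
Variables (R : realFieldType) (V : finType) (e : rel V) (w : V -> V -> R) (s t : V).
Hypothesis w_pos : forall u v : V, e u v -> 0 < w u v.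

Local Notation shortest := (shortest_st e w s t).
Local Notation darc := (darc e w s t).
Local Notation anc := (anc e w s t).
Local Notation dchain := (dchain e w s t).
Local Notation sdom := (sdom e w s t).
Local Notation idom := (idom e w s t).

Lemma wlen_cat x p1 p2 : wlen w x (p1 ++ p2) = wlen w x p1 + wlen w (last x p1) p2.
Proof. by elim: p1 x => [|y p1 IH] x /=; rewrite ?add0r // IH addrA. Qed.

(* Cut and paste: q ++ p2 is again an st-walk. *)
Lemma shortest_prefix_le p1 p2 q :
  shortest (p1 ++ p2) -> path e s q -> last s q = last s p1 ->
  wlen w s p1 <= wlen w s q.
Proof.
move=> [pp lp minp] pq lq.
have pqp2 : path e s (q ++ p2).
  by move: pp; rewrite !cat_path lq pq => /andP[_ ->].
have lqp2 : last s (q ++ p2) = t by rewrite last_cat lq -last_cat.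
by have := minp _ pqp2 lqp2; rewrite !wlen_cat lq lerD2r.
Qed.

Definition sdist (v : V) (r : R) : Prop :=
  exists p1 p2, [/\ shortest (p1 ++ p2), last s p1 = v & wlen w s p1 = r].

Lemma sdist_uniq v r1 r2 : sdist v r1 -> sdist v r2 -> r1 = r2.
Proof.
move=> [p1 [p2 [sp lp <-]]] [q1 [q2 [sq lq <-]]].
have pp1 : path e s p1 by case: sp; rewrite cat_path => /andP[].
have pq1 : path e s q1 by case: sq; rewrite cat_path => /andP[].
by apply/le_anti; rewrite !(shortest_prefix_le sp, shortest_prefix_le sq) ?lp ?lq.
Qed.

Lemma cons_split_last (p pre post : seq V) u :
  s :: p = pre ++ u :: post -> exists2 p1, p = p1 ++ post & last s p1 = u.
Proof.
case: pre => [|x pre] /= [-> ->]; first by exists [::].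
by exists (rcons pre u); rewrite ?cat_rcons ?last_rcons.
Qed.

Lemma darc_sdist u v : darc u v -> exists r, sdist u r /\ sdist v (r + w u v).
Proof.
move=> [p [sp [pre [post /cons_split_last [p1 def_p lp1]]]]]; subst p.
exists (wlen w s p1); split; first by exists p1, (v :: post).
exists (rcons p1 v), post; rewrite cat_rcons; split=> //; first exact: last_rcons.
by rewrite -cats1 wlen_cat lp1 /= addr0.
Qed.

Lemma darc_pos u v : darc u v -> 0 < w u v.
Proof.
move=> [p [[pp _ _] [pre [post /cons_split_last [p1 def_p lp1]]]]].
by move: pp; rewrite def_p cat_path lp1 /= => /and3P[_ /w_pos].
Qed.

Lemma anc_sdist u v : anc u v -> exists ru rv, [/\ sdist u ru, sdist v rv & ru < rv].
Proof.
elim=> [x y dxy | x y z _ [r1 [r2 [h1 h2 lt12]]] _ [r3 [r4 [h3 h4 lt34]]]].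
  have [r [hx hy]] := darc_sdist dxy.
  by exists r, (r + w x y); split; rewrite // ltrDl darc_pos.
exists r1, r4; split=> //.
by rewrite (sdist_uniq h2 h3) in lt12; exact: lt_trans lt34.
Qed.

Lemma anc_irrefl u : ~ anc u u.
Proof.
by move=> /anc_sdist [r1 [r2 [h1 h2]]]; rewrite (sdist_uniq h1 h2) ltxx.
Qed.

Lemma anc_asym u v : anc u v -> ~ anc v u.
Proof. by move=> huv hvu; apply: (@anc_irrefl u); apply: t_trans huv hvu. Qed.

Lemma dchain_cat a q1 q2 : dchain a (q1 ++ q2) <-> dchain a q1 /\ dchain (last a q1) q2.
Proof. by elim: q1 a => [|y q1 IH] a /=; [tauto | have := IH y; tauto]. Qed.

Lemma dchain_anc a q : dchain a q -> q <> [::] -> anc a (last a q).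
Proof.
elim: q a => [|y q IH] a //= [day dq] _.
case: q IH dq => [|z q] IH dq; first exact: t_step.
exact: t_trans (t_step _ _ _ _ day) (IH _ dq _).
Qed.

Lemma anc_dchain a b : anc a b -> exists q, [/\ dchain a q, last a q = b & q <> [::]].
Proof.
elim=> [x y dxy | x y z _ [q1 [d1 l1 n1]] _ [q2 [d2 l2 _]]]; first by exists [:: y].
exists (q1 ++ q2); split; first by apply/dchain_cat; rewrite l1.
  by rewrite last_cat l1.
by case: q1 n1 {d1 l1}.
Qed.

Lemma mem_dchain_anc a q z : dchain a q -> z \in q -> anc a z.
Proof.
elim: q a => [|y q IH] a //= [day dq]; rewrite inE => /predU1P[-> | zq].
  exact: t_step.
exact: t_trans (t_step _ _ _ _ day) (IH _ dq zq).
Qed.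

Lemma mem_dchain_anc_last a q z :
  dchain a q -> z \in a :: q -> z <> last a q -> anc z (last a q).
Proof.
move=> dq zq; case/splitPl: zq dq => q1 q2 lq1 dq.
have [/(_ dq) [_]] := dchain_cat a q1 q2; rewrite last_cat lq1 => dq2 _ nz.
by apply: (dchain_anc dq2) => q2nil; apply: nz; rewrite q2nil.
Qed.

Lemma shortest_dchain p : shortest p -> dchain s p.
Proof.
move=> sp; suff /(_ p s [::] erefl) : forall q a pre, s :: p = pre ++ a :: q -> dchain a q.
  by [].
elim=> [|y q IH] a pre def_p //; split.
  by exists p; split=> //; exists pre, q.
by apply: (IH y (rcons pre a)); rewrite cat_rcons.
Qed.

Definition reach (z : V) : Prop := exists2 q, dchain s q & last s q = z.

Lemma reach_prefix q z : dchain s q -> z \in s :: q -> reach z.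
Proof.
move=> dq zq; case/splitPl: zq dq => q1 q2 lq1 dq.
by have [/(_ dq) [dq1 _] _] := dchain_cat s q1 q2; exists q1.
Qed.

Lemma inD_reach z : inD e w s t z -> reach z.
Proof. by move=> [p [/shortest_dchain dp zp]]; exact: reach_prefix dp zp. Qed.

Lemma sdom_reach x v : reach x -> sdom x v -> reach v.
Proof. by move=> [q dq lq] [_ hv]; exact: reach_prefix dq (hv q dq lq). Qed.

Lemma sdom_anc x v : reach x -> sdom x v -> anc v x.
Proof.
move=> [q dq lq] [vx hv]; rewrite -lq in vx *.
exact: mem_dchain_anc_last dq (hv q dq lq) vx.
Qed.

Lemma idom_uniq x a b : reach x -> idom x a -> idom x b -> a = b.
Proof.
move=> rx [da ha] [db hb]; have [// | /eqP nab] := eqVneq a b; exfalso.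
have dab := ha b db (nesym nab); have dba := hb a da nab.
apply: anc_asym (sdom_anc (sdom_reach rx da) dab) _.
exact: sdom_anc (sdom_reach rx db) dba.
Qed.

Lemma sdom_anc_between x y v : sdom x v -> anc v y -> anc y x -> sdom y v.
Proof.
move=> [_ hv] avy ayx; split=> [vy | q dq lq].
  by rewrite vy in avy; exact: anc_irrefl avy.
have [q' [dq' lq' _]] := anc_dchain ayx.
have dqq' : dchain s (q ++ q') by apply/dchain_cat; rewrite lq.
have := hv _ dqq'; rewrite last_cat lq lq' -cat_cons mem_cat.
case/(_ erefl)/orP=> [// | vq'].
by case: (anc_asym avy (mem_dchain_anc dq' vq')).
Qed.

End ShortestPathDAG.

Theorem lemma3 (R : realFieldType) (V : finType) (e : rel V) (w : V -> V -> R)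
    (s t : V)
    (e_irr : irreflexive e) (e_sym : symmetric e)
    (G_conn : forall u v : V, connect e u v)
    (w_sym : forall u v : V, w u v = w v u)
    (w_pos : forall u v : V, e u v -> 0 < w u v)
    (x : V) (x_in : inD e w s t x) (x_ne_s : x <> s)
    (ix : V) (ix_def : idom e w s t x ix)
    (y : V) (y_in : inC e w s t x y)
    (iy : V) (iy_def : idom e w s t y iy) :
  anceq e w s t ix iy.
Proof.
have [yD [ix' [ix'_def [aixy ayx]]]] := y_in.
rewrite (idom_uniq w_pos (inD_reach x_in) ix'_def ix_def) in aixy.
have ix_sdom_y := sdom_anc_between w_pos ix_def.1 aixy ayx.
have [<- | /eqP nxy] := eqVneq ix iy; [by right | left].
have ry := inD_reach yD.
exact: sdom_anc (sdom_reach ry iy_def.1) (iy_def.2 ix ix_sdom_y nxy).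
Qed.
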